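(* Let $\vartheta$ be a compatible, recognisable random substitution on an alphabet $\mathcal A$ with $d$ letters. Then $A_n\subseteq A_{n+1}$ for all $n\ge1$, and $A=\bigcup_{n\ge1}A_n$ is a normal subgroup of the shuffle group $\Gamma$ of index at most $2^d$.
   Context: A random substitution on a finite alphabet $\mathcal A$ is a map $\vartheta$ from $\mathcal A$ to non-empty finite sets of non-empty words, extended to words by concatenating choices and iterated; elements of $\vartheta^n(a)$ are level-$n$ inflation words of type $a$. $X_\vartheta\subseteq\mathcal A^{\mathbb Z}$ is the set of sequences all of whose subwords are legal (subwords of words in some $\vartheta^p(a)$), with shift $\sigma$. $\vartheta$ is compatible if for each $a$ all words in $\vartheta(a)$ have the same letter counts; a compatible $\vartheta$ is recognisable if each $x\in X_\vartheta$ has a unique $y\in X_\vartheta$ and unique $0\le k\le|\vartheta(y_0)|-1$ with $\sigma^{-k}(x)\in\vartheta(y)$ (where $\vartheta(y)$ is the set of sequences $\cdots w_{-1}w_0w_1\cdots$, $w_i\in\vartheta(y_i)$, $w_0$ starting at index 0). Then every $\vartheta^n$ is recognisable, so each $x$ is uniquely a bi-infinite concatenation of level-$n$ inflation words with uniquely determined positions and types. For a permutation $\alpha$ of $\vartheta^n(a)$, $f_\alpha\in\operatorname{Aut}(X_\vartheta)$ replaces each level-$n$ inflation word $u_i$ of type $a$ in this decomposition by $\alpha(u_i)$. $\Gamma_{n,a}=\{f_\alpha:\alpha\in\operatorname{Sym}(\vartheta^n(a))\}$, $\Gamma_n=\prod_a\Gamma_{n,a}$ (an increasing chain in $n$), $\Gamma=\bigcup_n\Gamma_n$.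 $A_{n,a}=\{f_\alpha:\alpha$ an even permutation of $\vartheta^n(a)\}$ and $A_n=\prod_a A_{n,a}$. *)

From HB Require Import structures.
From mathcomp Require Import all_boot all_order all_algebra all_fingroup.
From Stdlib Require Import ClassicalEpsilon.
Set Implicit Arguments. Unset Strict Implicit. Unset Printing Implicit Defensive.
Import GRing.Theory.

Section RandomSubstitution.
Variable A : finType.
(* a random substitution: each letter is sent to a (finite) set of words,
   represented by a list; membership gives the set. *)
Variable theta : A -> seq (seq A).

Definition wf_subst : Prop :=
  (forall a, theta a != [::]) /\ (forall a w, w \in theta a -> w != [::]).

Definition compatible : Prop :=
  forall a u v, u \in theta a -> v \in theta a ->
    forall b : A, count_mem b u = count_mem b v.

Definition subst_word (u : seq A) : seq (seq A) :=
  foldr (fun b acc => [seq v ++ r | v <- theta b, r <- acc]) [:: [::]] u.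

Definition infl (n : nat) (a : A) : seq (seq A) :=
  iter n (fun S => undup (flatten (map subst_word S))) [:: [:: a]].

(* common length of the words in theta^n(a) (well defined under compatibility) *)
Definition ilen (n : nat) (a : A) : nat := size (head [::] (infl n a)).

Definition legal (u : seq A) : Prop :=
  exists (p : nat) (a : A), has (fun v => infix u v) (infl p a).

Definition inX (x : int -> A) : Prop :=
  forall (i : int) (m : nat), legal [seq x (i + j%:Z)%R | j <- iota 0 m].

(* sigma^{-k} x, where (sigma x)_i = x_{i+1} *)
Definition shift (x : int -> A) (k : nat) : int -> A := fun i => x (i - k%:Z)%R.

(* z = ... w_{-1} w_0 w_1 ... with w_0 starting at index 0 *)
Definition concat_rel (w : int -> seq A) (z : int -> A) : Prop :=
  exists s : int -> int, s 0%R = 0%R /\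
    (forall i, s (i + 1)%R = (s i + (size (w i))%:Z)%R) /\
    (forall i, w i = [seq z (s i + j%:Z)%R | j <- iota 0 (size (w i))]).

(* z belongs to theta^n(y) *)
Definition inflseq (n : nat) (y z : int -> A) : Prop :=
  exists w : int -> seq A, (forall i, w i \in infl n (y i)) /\ concat_rel w z.

Definition recognisable : Prop :=
  forall x, inX x ->
    exists! p : (int -> A) * nat,
      inX p.1 /\ (p.2 < ilen 1 (p.1 0%R))%N /\ inflseq 1 p.1 (shift x p.2).

Definition app (S : seq (seq A)) (al : {perm seq_sub S}) (u : seq A) : seq A :=
  match (insub u : option (seq_sub S)) with
  | Some s => val (al s)
  | None => u
  end.

(* f_alpha: replace each level-n inflation word u of type a in the
   (recognisability) decomposition of x by alpha(u) *)
Definition f_alpha (n : nat) (a : A) (al : {perm seq_sub (infl n a)})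
    (x : int -> A) : int -> A :=
  epsilon (inhabits x) (fun x' =>
    exists (y : int -> A) (k : nat) (w : int -> seq A),
      inX y /\ (k < ilen n (y 0%R))%N /\
      (forall i, w i \in infl n (y i)) /\
      concat_rel w (shift x k) /\
      concat_rel (fun i => if y i == a then app al (w i) else w i) (shift x' k)).

(* maps are compared as maps on X_theta *)
Definition eqX (f g : (int -> A) -> (int -> A)) : Prop :=
  forall x, inX x -> f x = g x.

(* the element of Gamma_n = prod_a Gamma_{n,a} given by a family of permutations *)
Definition gprod (n : nat) (als : forall a : A, {perm seq_sub (infl n a)}) :
    (int -> A) -> (int -> A) :=
  foldr (fun a g => f_alpha (als a) \o g) id (enum A).

Definition GammaN (n : nat) (g : (int -> A) -> (int -> A)) : Prop :=
  exists als : forall a : A, {perm seq_sub (infl n a)}, eqX g (gprod als).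

Definition AltN (n : nat) (g : (int -> A) -> (int -> A)) : Prop :=
  exists als : forall a : A, {perm seq_sub (infl n a)},
    (forall a, ~~ odd_perm (als a)) /\ eqX g (gprod als).

Definition Gamma (g : (int -> A) -> (int -> A)) : Prop := exists n, GammaN n g.
Definition Alt (g : (int -> A) -> (int -> A)) : Prop :=
  exists n, (1 <= n)%N /\ AltN n g.

End RandomSubstitution.

(* Recognisability makes the decomposition of a point x of X_theta into level-n
   inflation words unique once the word covering position 0 is fixed: by
   induction on n, a level-(n+1) decomposition refines into a level-n one of x
   sitting over a level-1 decomposition of its type sequence, and both are
   unique.  Hence a family F = (alpha_a)_a of permutations of the sets
   theta^n(a) acts on X_theta by rewriting every block, composition of these
   maps is the pointwise product of families, and two families inducing the
   same map agree on every letter that occurs in X_theta.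

   A level-n family also acts on level-(n+1) words, by rewriting the level-n
   words inside them; this gives a level-(n+1) family inducing the same map,
   and the lift is a homomorphism of symmetric groups for each letter.  Since
   all transpositions are conjugate, such a homomorphism sends even
   permutations to even ones, so A_n is contained in A_(n+1), and every
   subgroup and normality statement can be checked at a common level.  Two
   elements of Gamma_N whose families have the same parity vector in {0,1}^A
   differ by an element of A_N, so pairwise inequivalent cosets number at most
   2^d, and a maximal such set of representatives covers Gamma. *)

From mathcomp Require Import all_boot all_order all_algebra all_fingroup zify.
From Stdlib Require Import ClassicalEpsilon FunctionalExtensionality Classical.
Set Implicit Arguments. Unset Strict Implicit. Unset Printing Implicit Defensive.
Import Order.TTheory GRing.Theory Num.Theory.

Local Open Scope ring_scope.

(** * Tilings of the integer line *)

Lemma int_ind_succ_pred (P : int -> Prop) : P 0 -> (forall i, P i -> P (i + 1)) ->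
  (forall i, P i -> P (i - 1)) -> forall i, P i.
Proof.
move=> P0 PS PP; elim/int_rect => // n IH; [have := PS _ IH | have := PP _ IH];
  by congr P; lia.
Qed.

Lemma all2_size (S T : Type) (r : S -> T -> bool) s t : all2 r s t -> size s = size t.
Proof. by elim: s t => [|x s IH] [|y t] //= /andP [_ /IH ->]. Qed.

Lemma all2_nth (S T : Type) (r : S -> T -> bool) s t x0 y0 (j : nat) :
  all2 r s t -> (j < size s)%N -> r (nth x0 s j) (nth y0 t j).
Proof. by elim: s t j => [|x s IH] [|y t] [|j] //= /andP [h1 h2] hj //; exact: IH. Qed.

Definition offset (T : Type) (f : int -> T) (c : int) : int -> T := fun i => f (i + c).

Lemma offset0 (T : Type) (f : int -> T) : offset f 0 = f.
Proof. by apply: functional_extensionality => i; rewrite /offset addr0. Qed.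

Definition window (T : Type) (x : int -> T) (p : int) (m : nat) : seq T :=
  [seq x (p + j%:Z) | j <- iota 0 m].

Lemma window_cat (T : Type) (x : int -> T) p (m1 m2 : nat) :
  window x p (m1 + m2) = window x p m1 ++ window x (p + m1%:Z) m2.
Proof.
rewrite /window iotaD map_cat add0n -{2}[m1]addn0 iotaDl -map_comp.
by congr (_ ++ _); apply/eq_in_map => j _ /=; congr x; lia.
Qed.

Lemma window_nth (T : Type) (x : int -> T) p (m k : nat) d :
  (k < m)%N -> nth d (window x p m) k = x (p + k%:Z).
Proof. by move=> hk; rewrite (nth_map 0%N) ?size_iota // nth_iota. Qed.

Section Tiling.
Variable T : Type.
Implicit Types (w : int -> seq T) (x : int -> T) (o c i p : int).

Definition blocks_size w c (m : nat) : nat :=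
  sumn [seq size (w (c + j%:Z)) | j <- iota 0 m].

Lemma blocks_sizeSr w c m :
  blocks_size w c m.+1 = (blocks_size w c m + size (w (c + m%:Z)%R))%N.
Proof. by rewrite /blocks_size -addn1 iotaD map_cat sumn_cat /= addn0. Qed.

Lemma blocks_sizeSl w c m :
  blocks_size w c m.+1 = (size (w c) + blocks_size w (c + 1)%R m)%N.
Proof.
rewrite /blocks_size /= addr0; congr (_ + _)%N.
rewrite -[1%N]addn0 iotaDl -map_comp; congr sumn; apply/eq_in_map => j _ /=.
by congr (size (w _)); lia.
Qed.

Lemma size_flatten_blocks w c m :
  size (flatten [seq w (c + j%:Z) | j <- iota 0 m]) = blocks_size w c m.
Proof. by rewrite size_flatten /shape -map_comp. Qed.

(* The position where block [i] starts when the blocks [w] are laid end to end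
   and block [0] starts at [o]. *)
Definition start w o i : int :=
  if 0 <= i then o + (blocks_size w 0 `|i|%N)%:Z else o - (blocks_size w i `|i|%N)%:Z.

Lemma start0 w o : start w o 0 = o.
Proof. by rewrite /start lexx /= addr0. Qed.

Lemma startS w o i : start w o (i + 1) = start w o i + (size (w i))%:Z.
Proof.
rewrite /start; case: (lerP 0 i) => hi.
  have -> : (0 <= i + 1) = true by apply/idP; lia.
  have -> : `|(i + 1)%R|%N = `|i|%N.+1 by lia.
  rewrite blocks_sizeSr; have -> : 0 + `|i|%N%:Z = i by lia.
  lia.
case: (lerP 0 (i + 1)) => hi1.
  have -> : i = -1 by lia.
  have -> : `|((-1 + 1 : int))%R|%N = 0%N by [].
  by rewrite (blocks_sizeSl w (-1) 0) /blocks_size /=; lia.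
have -> : `|i|%N = `|(i + 1)%R|%N.+1 by lia.
rewrite blocks_sizeSl; lia.
Qed.

Lemma startP w o i : start w o (i - 1) = start w o i - (size (w (i - 1)))%:Z.
Proof. by rewrite -{2}(subrK 1 i) startS addrK. Qed.

Lemma start_unique w o (s : int -> int) : s 0 = o ->
  (forall i, s (i + 1) = s i + (size (w i))%:Z) -> forall i, s i = start w o i.
Proof.
move=> s0 sS; apply: int_ind_succ_pred; first by rewrite start0.
  by move=> i IH; rewrite sS startS IH.
move=> i IH; apply: (@addIr _ (size (w (i - 1)))%:Z).
by rewrite -sS -startS !subrK.
Qed.

Lemma start_origin w o i : start w o i = o + start w 0 i.
Proof.
symmetry; apply: (start_unique (s := fun i => o + start w 0 i)).
  by rewrite start0 addr0.
by move=> j; rewrite startS addrA.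
Qed.

Lemma eq_start w w' o : (forall i, size (w i) = size (w' i)) ->
  forall i, start w o i = start w' o i.
Proof.
move=> H; apply: start_unique; first exact: start0.
by move=> j; rewrite startS H.
Qed.

Lemma startD w o c (m : nat) : start w o (c + m%:Z) = start w o c + (blocks_size w c m)%:Z.
Proof.
elim: m => [|m IH]; first by rewrite !addr0.
have -> : c + m.+1%:Z = (c + m%:Z) + 1 by lia.
by rewrite startS IH blocks_sizeSr; lia.
Qed.

Lemma start_offset w o c i : start (offset w c) (start w o c) i = start w o (i + c).
Proof.
symmetry; apply: (start_unique (s := fun i => start w o (i + c))).
  by rewrite add0r.
by move=> j; rewrite /offset -startS; congr start; lia.
Qed.

Lemma start_gap w o i j : i < j -> start w o i + (size (w i))%:Z <= start w o j.
Proof.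
move=> hij; have -> : j = (i + 1) + `|(j - i - 1)%R|%N%:Z by lia.
rewrite startD startS; lia.
Qed.

Definition in_block w o i p := start w o i <= p < start w o i + (size (w i))%:Z.

Lemma in_block_unique w o i j p : in_block w o i p -> in_block w o j p -> i = j.
Proof.
rewrite /in_block => /andP[h1 h2] /andP[h3 h4].
by case: (ltrgtP i j) => // hij; have := start_gap w o hij; lia.
Qed.

Lemma in_block_exists w o : (forall i, (0 < size (w i))%N) ->
  forall p, exists i, in_block w o i p.
Proof.
move=> Hs; suff H : forall q, exists i, in_block w o i (o + q).
  by move=> p; have [i] := H (p - o); rewrite addrC subrK; exists i.
apply: int_ind_succ_pred.
- by exists 0; rewrite /in_block start0 addr0; have := Hs 0; lia.
- move=> q [i /andP[h1 h2]].
  case: (ltrP (o + (q + 1)) (start w o i + (size (w i))%:Z)) => h3.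
    by exists i; apply/andP; split; lia.
  by exists (i + 1); rewrite /in_block startS; have := Hs (i + 1); lia.
- move=> q [i /andP[h1 h2]].
  case: (lerP (start w o i) (o + (q - 1))) => h3.
    by exists i; apply/andP; split; lia.
  by exists (i - 1); rewrite /in_block startP; have := Hs (i - 1); lia.
Qed.

Lemma start_cover w o : (forall i, (0 < size (w i))%N) ->
  forall p, exists i (j : nat), (j < size (w i))%N /\ p = start w o i + j%:Z.
Proof.
move=> Hs p; have [i /andP[h1 h2]] := in_block_exists o Hs p.
by exists i, `|(p - start w o i)%R|%N; split; lia.
Qed.

Definition tiles w x o := forall i, w i = window x (start w o i) (size (w i)).

Lemma tiles_nth w x o i (k : nat) d : tiles w x o -> (k < size (w i))%N ->
  nth d (w i) k = x (start w o i + k%:Z).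
Proof. by move=> H hk; rewrite H window_nth. Qed.

Lemma tiles_seq_unique w x x' o : (forall i, (0 < size (w i))%N) ->
  tiles w x o -> tiles w x' o -> x = x'.
Proof.
move=> Hs H H'; apply: functional_extensionality => p.
have [i [k [hk ->]]] := start_cover o Hs p.
by rewrite -(tiles_nth (x p) H hk) -(tiles_nth (x p) H' hk).
Qed.

Lemma window_fill (U : Type) w (ws : int -> seq U) o :
  (forall i, (0 < size (w i))%N) -> (forall i, size (ws i) = size (w i)) ->
  exists v, forall i, ws i = window v (start w o i) (size (w i)).
Proof.
move=> Hs Hws; case e0: (ws 0) (Hs 0) => [|a0 s0]; first by rewrite -Hws e0.
move=> _; pose blk p := epsilon (inhabits 0) (fun i => in_block w o i p).
have hblk p : in_block w o (blk p) p.
  exact: (epsilon_spec (inhabits 0) (fun i => in_block w o i p) (in_block_exists o Hs p)).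
exists (fun p => nth a0 (ws (blk p)) `|(p - start w o (blk p))%R|%N) => i.
rewrite -{1}(mkseq_nth a0 (ws i)) /mkseq Hws; apply/eq_in_map => j.
rewrite mem_iota => /andP[_ hj].
have hi : in_block w o i (start w o i + j%:Z) by apply/andP; split; lia.
rewrite -(in_block_unique hi (hblk _)).
by have -> : `|(start w o i + j%:Z - start w o i)%R|%N = j by lia.
Qed.

Lemma tiles_exists w o : (forall i, (0 < size (w i))%N) -> exists x, tiles w x o.
Proof. by move=> Hs; apply: window_fill. Qed.

Lemma tiles_blocks_unique w w' x o : tiles w x o -> tiles w' x o ->
  (forall i, size (w i) = size (w' i)) -> w = w'.
Proof.
move=> H H' Hs; apply: functional_extensionality => i.
by rewrite H H' Hs (eq_start o Hs).
Qed.

Lemma tiles_shift w x o c : tiles w (offset x c) o <-> tiles w x (o + c).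
Proof.
have E i (j : nat) : start w o i + j%:Z + c = start w (o + c) i + j%:Z.
  by rewrite (start_origin w o) (start_origin w (o + c)); lia.
by split => H i; rewrite {1}H; apply/eq_in_map => j _; rewrite /offset /= E.
Qed.

Lemma tiles_offset w x o c : tiles w x o -> tiles (offset w c) x (start w o c).
Proof. by move=> H i; rewrite start_offset; exact: H. Qed.

Lemma tiles_flatten w x o c m : tiles w x o ->
  flatten [seq w (c + j%:Z) | j <- iota 0 m] = window x (start w o c) (blocks_size w c m).
Proof.
move=> H; elim: m => [|m IH] //.
rewrite blocks_sizeSr window_cat -IH -addn1 iotaD map_cat flatten_cat /= cats0.
by rewrite add0n {1}H startD.
Qed.

Section Grouping.
Variables (t : int -> int) (L : int -> nat).
Hypothesis tS : forall i, t (i + 1) = t i + (L i)%:Z.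

Definition group_blocks w i := flatten [seq w (t i + j%:Z) | j <- iota 0 (L i)].

Lemma start_group w o i : start (group_blocks w) (start w o (t 0)) i = start w o (t i).
Proof.
symmetry; apply: (start_unique (s := fun i => start w o (t i))) => // k.
by rewrite tS startD size_flatten_blocks.
Qed.

Lemma tiles_group w x o : tiles w x o -> tiles (group_blocks w) x (start w o (t 0)).
Proof.
move=> H i; rewrite start_group {2}/group_blocks size_flatten_blocks.
exact: tiles_flatten.
Qed.

End Grouping.

End Tiling.

Lemma window_infix_blocks (T : eqType) (w : int -> seq T) (x : int -> T) o p m :
  (forall i, (0 < size (w i))%N) -> tiles w x o ->
  exists c N, infix (window x p m) (flatten [seq w (c + j%:Z) | j <- iota 0 N]).
Proof.
move=> Hs H; case: m => [|m]; first by exists 0, 0%N; exact: infix0s.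
have [i1 /andP [a1 b1]] := in_block_exists o Hs p.
have [i2 /andP [a2 b2]] := in_block_exists o Hs (p + m%:Z).
have h12 : i1 <= i2 by case: (lerP i1 i2) => // h; have := start_gap w o h; lia.
set N := `|(i2 - i1)%R|%N.+1.
exists i1, N; rewrite (tiles_flatten _ _ H).
have hN : start w o i1 + (blocks_size w i1 N)%:Z = start w o i2 + (size (w i2))%:Z.
  by rewrite -startD -startS; congr start; lia.
set d1 := `|(p - start w o i1)%R|%N.
set d2 := `|(start w o i1 + (blocks_size w i1 N)%:Z - p - m.+1%:Z)%R|%N.
have -> : blocks_size w i1 N = (d1 + (m.+1 + d2))%N by rewrite /d1 /d2; lia.
rewrite !window_cat; have -> : start w o i1 + d1%:Z = p by rewrite /d1; lia.
exact: infix_infix.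
Qed.

Lemma concat_relE (A : finType) (w : int -> seq A) x (k : nat) :
  concat_rel w (shift x k) <-> tiles w x (- k%:Z).
Proof.
have E i (j : nat) : start w 0 i + j%:Z - k%:Z = start w (- k%:Z) i + j%:Z.
  by rewrite (start_origin w (- k%:Z)); lia.
split.
  move=> [s [s0 [sS sw]]] i; rewrite {1}sw; apply/eq_in_map => j _.
  by rewrite /shift (start_unique s0 sS) E.
move=> H; exists (start w 0); split; first exact: start0.
split=> [i|i]; first by rewrite startS.
by rewrite {1}(H i); apply/eq_in_map => j _; rewrite /shift E.
Qed.

(** * Substitutions on words *)

Section SubstWith.
Variable A : eqType.
Implicit Types (f g h : A -> seq (seq A)) (u v W : seq A).

Definition subst_with f u : seq (seq A) :=
  foldr (fun b acc => [seq v ++ r | v <- f b, r <- acc]) [:: [::]] u.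

Lemma mem_subst_nil f W : W \in subst_with f [::] <-> W = [::].
Proof. by rewrite inE; split => /eqP. Qed.

Lemma mem_subst_cons f c u W : W \in subst_with f (c :: u) <->
  exists v r, [/\ v \in f c, r \in subst_with f u & W = v ++ r].
Proof.
split; first by move=> /allpairsP [[v r] /= [h1 h2 ->]]; exists v, r.
by move=> [v [r [h1 h2 ->]]]; apply/allpairsP; exists (v, r).
Qed.

Lemma mem_subst_all2 f u W : W \in subst_with f u <->
  exists ws, all2 (fun c w => w \in f c) u ws /\ W = flatten ws.
Proof.
elim: u W => [|c u IH] W.
  split; first by move=> /mem_subst_nil ->; exists [::].
  by move=> [[|w ws] [] //= _ ->]; apply/mem_subst_nil.
rewrite mem_subst_cons; split.
  move=> [v [r [hv /IH [ws [h1 ->]] ->]]].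
  by exists (v :: ws); rewrite /= hv h1.
move=> [[|w ws] [] //= /andP [hw h1] ->].
by exists w, (flatten ws); split => //; apply/IH; exists ws.
Qed.

Lemma mem_subst_cat f u1 u2 W : W \in subst_with f (u1 ++ u2) <->
  exists W1 W2, [/\ W1 \in subst_with f u1, W2 \in subst_with f u2 & W = W1 ++ W2].
Proof.
elim: u1 W => [|c u1 IH] W.
  split; first by move=> h; exists [::], W; split => //; apply/mem_subst_nil.
  by move=> [W1 [W2 [/mem_subst_nil -> h2 ->]]].
rewrite (mem_subst_cons f c (u1 ++ u2)); split.
  move=> [v [r [hv /IH [W1 [W2 [h1 h2 ->]]] ->]]].
  exists (v ++ W1), W2; rewrite catA; split => //.
  by apply/mem_subst_cons; exists v, W1.
move=> [W1 [W2 [/mem_subst_cons [v [r [hv hr ->]]] h2 ->]]].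
exists v, (r ++ W2); rewrite catA; split => //.
by apply/IH; exists r, W2.
Qed.

Lemma mem_subst_comp f g h :
  (forall c W, W \in h c <-> exists U, U \in f c /\ W \in subst_with g U) ->
  forall v W, W \in subst_with h v <->
    exists U, U \in subst_with f v /\ W \in subst_with g U.
Proof.
move=> Hh; elim=> [|c v IH] W.
  split; first by move=> /mem_subst_nil ->; exists [::]; split; apply/mem_subst_nil.
  by move=> [U [/mem_subst_nil -> /mem_subst_nil ->]]; apply/mem_subst_nil.
rewrite mem_subst_cons; split.
  move=> [W1 [W2 [/Hh [U1 [hU1 hW1]] /IH [U2 [hU2 hW2]] ->]]].
  exists (U1 ++ U2); split; first by apply/mem_subst_cons; exists U1, U2.
  by apply/mem_subst_cat; exists W1, W2.
move=> [U [/mem_subst_cons [U1 [U2 [hU1 hU2 ->]]] /mem_subst_cat [W1 [W2 [h1 h2 ->]]]]].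
by exists W1, W2; split => //; [apply/Hh; exists U1 | apply/IH; exists U2].
Qed.

Lemma mem_subst_unit v W : W \in subst_with (fun c => [:: [:: c]]) v <-> W = v.
Proof.
elim: v W => [|c v IH] W; first exact: mem_subst_nil.
rewrite mem_subst_cons; split; first by move=> [x [r [/[!inE] /eqP -> /IH -> ->]]].
by move=> ->; exists [:: c], v; split => //; [rewrite inE | apply/IH].
Qed.

Lemma subst_with_exists f u : (forall c, exists v, v \in f c) ->
  exists W, W \in subst_with f u.
Proof.
move=> H; elim: u => [|c u [r hr]]; first by exists [::]; apply/mem_subst_nil.
by have [v hv] := H c; exists (v ++ r); apply/mem_subst_cons; exists v, r.
Qed.

Lemma subst_with_infix f u v W : (forall c, exists x, x \in f c) ->
  infix u v -> W \in subst_with f u -> exists2 W', W' \in subst_with f v & infix W W'.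
Proof.
move=> Hf /infixP [s [s' ->]] hW.
have [Ws hs] := subst_with_exists s Hf; have [Ws' hs'] := subst_with_exists s' Hf.
exists (Ws ++ W ++ Ws'); last exact: infix_infix.
by apply/mem_subst_cat; exists Ws, (W ++ Ws'); split => //; apply/mem_subst_cat; exists W, Ws'.
Qed.

Section Compatible.
Variable f : A -> seq (seq A).
Hypothesis f_perm : forall c u v, u \in f c -> v \in f c -> perm_eq u v.

Lemma subst_with_count (P : pred A) u W : W \in subst_with f u ->
  count P W = sumn [seq count P (head [::] (f c)) | c <- u].
Proof.
elim: u W => [|c u IH] W; first by move=> /mem_subst_nil ->.
move=> /mem_subst_cons [v [r [hv hr ->]]].
rewrite count_cat (IH _ hr) /=; congr (_ + _)%N.
have hh : head [::] (f c) \in f c by case: (f c) hv => // x s _; rewrite mem_head.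
by apply/seq.permP; exact: f_perm hv hh.
Qed.

Lemma subst_with_perm U U' W W' : perm_eq U U' ->
  W \in subst_with f U -> W' \in subst_with f U' -> perm_eq W W'.
Proof.
move=> hU hW hW'; apply/seq.permP => P.
by rewrite (subst_with_count P hW) (subst_with_count P hW'); apply/perm_sumn/perm_map.
Qed.

End Compatible.

End SubstWith.

(** * Permutations *)

Section PermApply.
Variables (A : finType) (S : seq (seq A)).
Implicit Types (al bl : {perm seq_sub S}).

Lemma app_val al (s : seq_sub S) : app al (val s) = val (al s).
Proof. by rewrite /app valK. Qed.

Lemma app_out al u : u \notin S -> app al u = u.
Proof. by move=> hu; rewrite /app insubN. Qed.

Lemma app_in al u : u \in S -> app al u \in S.
Proof. by rewrite /app; case: insubP => [s _ _|//] _; exact: ssvalP. Qed.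

Lemma appM al bl u : app (bl * al) u = app al (app bl u).
Proof.
case: (boolP (u \in S)) => hu; last by rewrite !app_out.
by rewrite -[u]/(val (Sub u hu : seq_sub S)) !app_val permM.
Qed.

Lemma app1 u : app (1 : {perm seq_sub S}) u = u.
Proof.
case: (boolP (u \in S)) => hu; last by rewrite !app_out.
by rewrite -[u]/(val (Sub u hu : seq_sub S)) app_val perm1.
Qed.

Lemma eq_app al bl : {in S, app al =1 app bl} -> al = bl.
Proof.
by move=> H; apply/permP => s; apply: val_inj; rewrite -!app_val; apply/H/ssvalP.
Qed.

End PermApply.

Section MorphismParity.
Local Open Scope group_scope.
Variables T T' : finType.
Variable phi : {perm T} -> {perm T'}.
Hypothesis phiM : {morph phi : s t / s * t}.

Lemma morph_perm1 : phi 1 = 1.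
Proof. by apply: (mulgI (phi 1)); rewrite -phiM !mulg1. Qed.

Lemma odd_morph_permV s : odd_perm (phi s^-1) = odd_perm (phi s).
Proof.
have := congr1 (@odd_perm _) (phiM s^-1 s).
by rewrite mulVg morph_perm1 odd_perm1 odd_permM; case: odd_perm; case: odd_perm.
Qed.

Lemma odd_morph_permJ s t : odd_perm (phi (s ^ t)) = odd_perm (phi s).
Proof.
rewrite conjgE !phiM !odd_permM odd_morph_permV.
by case: (odd_perm (phi t)); case: (odd_perm (phi s)).
Qed.

(* All transpositions are conjugate, so [phi] maps them to permutations of
   one common parity. *)
Lemma odd_morph_tperm x y x' y' : x != y -> x' != y' ->
  odd_perm (phi (tperm x y)) = odd_perm (phi (tperm x' y')).
Proof.
move=> hxy hxy'; set y1 := tperm x x' y.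
have hy1 : x' != y1.
  by rewrite -(tpermL x x') /y1 (inj_eq (@perm_inj _ _)).
pose pi := tperm x x' * tperm y1 y'.
have hpx : pi x = x' by rewrite /pi permM tpermL tpermD // eq_sym.
have hpy : pi y = y' by rewrite /pi permM -/y1 tpermL.
by rewrite -hpx -hpy -tpermJ odd_morph_permJ.
Qed.

Lemma morph_perm_even s : ~~ odd_perm s -> ~~ odd_perm (phi s).
Proof.
case: (prod_tpermP s) => ts -> hts; rewrite odd_perm_prod //.
case: ts hts => [|t0 ts0] hts; first by rewrite big_nil morph_perm1 odd_perm1.
have ht0 : t0.1 != t0.2 by case/andP: hts.
suff H ts : all dpair ts -> odd_perm (phi (\prod_(t <- ts) tperm t.1 t.2)) =
    odd (size ts) && odd_perm (phi (tperm t0.1 t0.2)).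
  by move=> /negbTE ho; rewrite H // ho.
elim: ts => [|t ts IH] /=; first by rewrite big_nil morph_perm1 odd_perm1.
case/andP=> ht hts'; rewrite big_cons phiM odd_permM IH // (odd_morph_tperm ht ht0).
by case: odd_perm; case: odd.
Qed.

End MorphismParity.

(** * Inflation words *)

Section Shuffles.
Variables (A : finType) (theta : A -> seq (seq A)).
Implicit Types (x y : int -> A) (o : int).

Local Notation infl := (infl theta).
Local Notation ilen := (ilen theta).
Local Notation inX := (inX theta).
Local Notation legal := (legal theta).
Local Notation eqX := (eqX theta).

Lemma mem_inflS n a W : W \in infl n.+1 a <->
  exists U, U \in infl n a /\ W \in subst_with theta U.
Proof.
rewrite /infl iterS -/(infl n a) mem_undup; split.
  by move=> /flattenP [s /mapP [U hU ->] hW]; exists U.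
move=> [U [hU hW]]; apply/flattenP; exists (subst_with theta U) => //.
by apply/mapP; exists U.
Qed.

Lemma mem_inflD q m a W : W \in infl (q + m) a <->
  exists v, v \in infl q a /\ W \in subst_with (infl m) v.
Proof.
elim: m W => [|m IH] W.
  rewrite addn0; change (subst_with (infl 0)) with (subst_with (fun c : A => [:: [:: c]])).
  split; first by move=> h; exists W; split => //; apply/mem_subst_unit.
  by move=> [v [hv /mem_subst_unit ->]].
have comp := mem_subst_comp (fun c W' => mem_inflS m c W').
rewrite addnS mem_inflS; split.
  by move=> [U [/IH [v [hv hU]] hW]]; exists v; split => //; apply/comp; exists U.
by move=> [v [hv /comp [U [hU hW]]]]; exists U; split => //; apply/IH; exists v.
Qed.

Lemma mem_infl1 a W : W \in infl 1 a <-> W \in theta a.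
Proof.
rewrite mem_inflS; split.
  by move=> [U [/[!inE] /eqP -> /mem_subst_cons [v [r [hv /mem_subst_nil -> ->]]]]]; rewrite cats0.
move=> h; exists [:: a]; split; first by rewrite inE.
by apply/mem_subst_cons; exists W, [::]; rewrite cats0; split => //; apply/mem_subst_nil.
Qed.

Definition refines n b W (p : seq A * seq (seq A)) :=
  [/\ p.1 \in theta b, all2 (fun c w => w \in infl n c) p.1 p.2 & W = flatten p.2].

Lemma mem_inflSl n b W : W \in infl n.+1 b <-> exists p, refines n b W p.
Proof.
rewrite -add1n mem_inflD; split.
  move=> [v [/mem_infl1 hv /mem_subst_all2 [ws [h1 h2]]]].
  by exists (v, ws).
move=> [[v ws] [/= hv h1 h2]]; exists v; split; first exact/mem_infl1.
by apply/mem_subst_all2; exists ws.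
Qed.

Definition split_infl n b W := epsilon (inhabits ([::], [::])) (refines n b W).

Lemma split_inflP n b W : W \in infl n.+1 b -> refines n b W (split_infl n b W).
Proof. by move/mem_inflSl; exact: epsilon_spec. Qed.

Lemma legal_infix u v : legal v -> infix u v -> legal u.
Proof.
move=> [p [a /hasP [W hW hv]]] huv; exists p, a; apply/hasP; exists W => //.
exact: infix_trans huv hv.
Qed.

Hypothesis Hwf : wf_subst theta.

Lemma theta_exists c : exists v, v \in theta c.
Proof. by case: Hwf => H _; case: (theta c) (H c) => [|v s] // _; exists v; rewrite mem_head. Qed.

Lemma size_theta_gt0 c v : v \in theta c -> (0 < size v)%N.
Proof. by case: Hwf => _ /[apply]; case: v. Qed.

Lemma infl_exists n a : exists W, W \in infl n a.
Proof.
elim: n a => [|n IH] a; first by exists [:: a]; rewrite inE.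
have [U hU] := IH a; have [W hW] := subst_with_exists U theta_exists.
by exists W; apply/mem_inflS; exists U.
Qed.

Lemma size_infl_gt0 n a W : W \in infl n a -> (0 < size W)%N.
Proof.
elim: n a W => [|n IH] a W; first by rewrite inE => /eqP ->.
move=> /mem_inflS [[|c U] [/IH // hU /mem_subst_cons [v [r [/size_theta_gt0 + _ ->]]]]].
by case: v.
Qed.

Lemma infl_head n a : head [::] (infl n a) \in infl n a.
Proof. by have [W] := infl_exists n a; case: (infl n a) => // x s _; rewrite mem_head. Qed.

Lemma legal_subst_infl n u W : legal u -> W \in subst_with (infl n) u -> legal W.
Proof.
move=> [P [a /hasP [V hV huV]]] hW.
have [W' hW' hWW'] := subst_with_infix (infl_exists n) huV hW.
exists (P + n)%N, a; apply/hasP; exists W' => //.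
by apply/mem_inflD; exists V.
Qed.

Hypothesis Hcomp : compatible theta.

Lemma infl_perm_eq n a u v : u \in infl n a -> v \in infl n a -> perm_eq u v.
Proof.
have theta_perm c u' v' : u' \in theta c -> v' \in theta c -> perm_eq u' v'.
  by move=> hu hv; apply/allP => b _ /=; apply/eqP; exact: (Hcomp hu hv).
elim: n a u v => [|n IH] a u v; first by rewrite !inE => /eqP -> /eqP ->.
move=> /mem_inflS [U [hU hu]] /mem_inflS [V [hV hv]].
exact: (subst_with_perm theta_perm (IH _ _ _ hU hV) hu hv).
Qed.

Lemma size_infl n a u : u \in infl n a -> size u = ilen n a.
Proof. by move=> hu; apply/perm_size/(infl_perm_eq hu)/infl_head. Qed.

Lemma ilen_gt0 n a : (0 < ilen n a)%N.
Proof. exact: size_infl_gt0 (infl_head n a). Qed.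

(** * Decompositions into inflation words *)

Definition decomp n x y o w := [/\ inX y, forall i, w i \in infl n (y i) & tiles w x o].

(* Block [0] covers position [0]; with [o = -k] this is the condition
   [0 <= k < |theta^n(y_0)|] of recognisability. *)
Definition covers0 n y o := - (ilen n (y 0))%:Z < o <= 0.

Lemma inX_offset y c : inX y -> inX (offset y c).
Proof.
move=> H i m; have := H (i + c) m; congr legal; apply/eq_in_map => j _.
by rewrite /offset; congr y; lia.
Qed.

Lemma decomp_size_gt0 n x y o w i : decomp n x y o w -> (0 < size (w i))%N.
Proof. by case=> _ H _; exact: size_infl_gt0 (H i). Qed.

Lemma size_decomp n x y o w i : decomp n x y o w -> size (w i) = ilen n (y i).
Proof. by case=> _ H _; exact: size_infl (H i). Qed.

Lemma decomp_inX n x y o w : decomp n x y o w -> inX x.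
Proof.
move=> D; case: (D) => hy hw hc p m.
have [c [N]] := window_infix_blocks p m (fun i => decomp_size_gt0 i D) hc.
move/legal_infix; apply; apply: (legal_subst_infl (hy c N)).
apply/mem_subst_all2; exists [seq w (c + j%:Z) | j <- iota 0 N]; split => //.
by rewrite all2E !size_map eqxx zip_map all_map; apply/allP => j _; exact: hw.
Qed.

Lemma decomp_offset n x y o w c : decomp n x y o w ->
  decomp n x (offset y c) (start w o c) (offset w c).
Proof.
by case=> hy hw hc; split; [exact: inX_offset | move=> i; exact: hw | exact: tiles_offset].
Qed.

Lemma decomp_covers0 n x y o w : decomp n x y o w ->
  exists c, decomp n x (offset y c) (start w o c) (offset w c) /\
            covers0 n (offset y c) (start w o c).
Proof.
move=> D; have [c /andP [h1 h2]] := in_block_exists o (fun i => decomp_size_gt0 i D) 0.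
exists c; split; first exact: decomp_offset.
by rewrite /covers0 /offset add0r -(size_decomp c D); apply/andP; split; lia.
Qed.

Lemma decomp0 x : inX x -> decomp 0 x x 0 (fun i => [:: x i]).
Proof.
move=> hx; split => // [i|]; first by rewrite inE.
have hs i : i = start (fun i => [:: x i]) 0 i by apply: (start_unique (s := id)).
by move=> i; rewrite -hs /window /= addr0.
Qed.

Hypothesis Hrec : recognisable theta.

Lemma decomp_exists n x : inX x -> exists y o w, decomp n x y o w.
Proof.
elim: n x => [|n IH] x hx; first by exists x, 0, (fun i => [:: x i]); exact: decomp0.
have [u [p [B [hu hB hcB]]]] := IH x hx.
have [[y k] [[/= hy [_ [V [hV /concat_relE hcV]]]] _]] := Hrec hu.
pose t := start V (- k%:Z).
have tS i : t (i + 1) = t i + (size (V i))%:Z by rewrite /t startS.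
exists y, (start B p (t 0)), (group_blocks t (fun i => size (V i)) B).
split => //; last exact: tiles_group.
move=> i; apply/mem_inflSl; exists (V i, [seq B (t i + j%:Z) | j <- iota 0 (size (V i))]).
split => //=; first exact/mem_infl1.
by rewrite {1}(hcV i) all2E !size_map eqxx zip_map all_map; apply/allP => j _; exact: hB.
Qed.

Definition unique_decomp n := forall x y o w y' o' w',
  decomp n x y o w -> decomp n x y' o' w' ->
  exists c, [/\ y' = offset y c, o' = start w o c & w' = offset w c].

Definition unique_covering_decomp n := forall x y o w y' o' w',
  decomp n x y o w -> covers0 n y o -> decomp n x y' o' w' -> covers0 n y' o' ->
  [/\ y' = y, o' = o & w' = w].

Lemma covers0P n y o : covers0 n y o <->
  exists2 k : nat, o = - k%:Z & (k < ilen n (y 0%R))%N.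
Proof.
split; first by case/andP=> h1 h2; exists `|o|%N; lia.
by case=> k -> hk; apply/andP; split; lia.
Qed.

Lemma unique_covering_of_unique n : unique_decomp n -> unique_covering_decomp n.
Proof.
move=> U x y o w y' o' w' D N D' N'.
have [c [ey eo ew]] := U _ _ _ _ _ _ _ D D'.
suff c0 : c = 0 by rewrite c0 !offset0 start0 in ey eo ew.
move: N N'; rewrite /covers0 ey eo /offset add0r -(size_decomp 0 D) -(size_decomp c D).
have := size_decomp 0 D; set s0 := size (w 0) => _.
by case: (ltrgtP c 0) => // hc; have := start_gap w o hc; rewrite start0 -/s0; lia.
Qed.

Lemma unique_of_unique_covering n : unique_covering_decomp n -> unique_decomp n.
Proof.
move=> NU x y o w y' o' w' D D'.
have [c1 [D1 N1]] := decomp_covers0 D; have [c2 [D2 N2]] := decomp_covers0 D'.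
have [ey eo ew] := NU _ _ _ _ _ _ _ D1 N1 D2 N2.
have offsetE (T : Type) (f g : int -> T) : offset g c2 = offset f c1 -> g = offset f (c1 - c2).
  move=> e; apply: functional_extensionality => i.
  by have := congr1 (fun f => f (i - c2)) e; rewrite /offset subrK => ->; congr f; lia.
exists (c1 - c2); split; [exact: offsetE | | exact: offsetE].
have := start_offset w' o' c2 (- c2); rewrite addNr start0 => <-.
by rewrite ew eo start_offset; congr start; lia.
Qed.

Lemma unique_covering_decomp1 : unique_covering_decomp 1.
Proof.
move=> x y o w y' o' w' D N D' N'.
have [k ek hk] := (covers0P _ _ _).1 N; have [k' ek' hk'] := (covers0P _ _ _).1 N'.
have [p [_ Hu]] := Hrec (decomp_inX D).
have recog y0 k0 w0 : decomp 1 x y0 (- k0%:Z) w0 -> (k0 < ilen 1 (y0 0%R))%N -> p = (y0, k0).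
  case=> hy0 hw0 hc0 hk0; apply: Hu; split => //; split => //.
  by exists w0; split => //; apply/concat_relE.
rewrite ek in D; rewrite ek' in D'.
have [ey ekk] : (y', k') = (y, k) by rewrite -(recog _ _ _ D hk) -(recog _ _ _ D' hk').
subst y' k' o o'; split => //.
case: (D) => _ _ hc; case: (D') => _ _ hc'; apply: (tiles_blocks_unique hc' hc) => i.
by rewrite (size_decomp i D) (size_decomp i D').
Qed.

Lemma decomp_refine n x y o W : decomp n.+1 x y o W ->
  let V i := (split_infl n (y i) (W i)).1 in
  exists u B, [/\ decomp n x u o B, decomp 1 u y 0 V,
    W = group_blocks (start V 0) (fun i => size (V i)) B &
    forall i, window B (start V 0 i) (size (V i)) = (split_infl n (y i) (W i)).2].
Proof.
move=> D V; case: (D) => hy hW hcW.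
set ws := fun i => (split_infl n (y i) (W i)).2.
have hV i : refines n (y i) (W i) (V i, ws i) by apply: split_inflP.
have hVs i : (0 < size (V i))%N by have [h _ _] := hV i; exact: size_theta_gt0 h.
have [u hu] := tiles_exists 0 hVs.
have [B hB] : exists B, forall i, ws i = window B (start V 0 i) (size (V i)).
  by apply: window_fill => // i; have [_ h _] := hV i; rewrite (all2_size h).
have hBin m : B m \in infl n (u m).
  have [i [j [hj ->]]] := start_cover 0 hVs m.
  rewrite -(window_nth B _ [::] hj) -hB -(tiles_nth (u 0) hu hj).
  by have [_ h _] := hV i; apply: all2_nth h _.
have [x' hx'] := tiles_exists o (fun m => size_infl_gt0 (hBin m)).
have eW : W = group_blocks (start V 0) (fun i => size (V i)) B.
  apply: functional_extensionality => i.
  by rewrite /group_blocks -/(window _ _ _) -hB; have [] := hV i.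
have := tiles_group (fun i => startS V 0 i) hx'; rewrite !start0 -eW.
move/(tiles_seq_unique (fun i => decomp_size_gt0 i D) hcW) => ex; subst x'.
have D1 : decomp 1 u y 0 V by split => // i; apply/mem_infl1; have [] := hV i.
by exists u, B; split => // [|i]; [split => //; exact: decomp_inX D1 | rewrite -hB].
Qed.

Lemma unique_decomp0 : unique_decomp 0.
Proof.
have decomp0E x y o w : decomp 0 x y o w -> w = (fun i => [:: y i]) /\ y = offset x o.
  case=> _ hw hc.
  have ew : w = (fun i => [:: y i]).
    by apply: functional_extensionality => i; apply/eqP; rewrite -mem_seq1 hw.
  have hs i : o + i = start w o i.
    by apply: (start_unique (s := fun i => o + i)) => [|j]; rewrite ?addr0 // ew addrA.
  split => //; apply: functional_extensionality => i.
  by have := hc i; rewrite -hs ew /window /= addr0 /offset addrC => -[].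
move=> x y o w y' o' w' /decomp0E [-> ->] /decomp0E [-> ->].
have hs i : o + i = start (fun i => [:: x (i + o)]) o i.
  by apply: (start_unique (s := fun i => o + i)) => [|j]; rewrite ?addr0 // addrA.
exists (o' - o); rewrite -hs; split; [|lia|]; apply: functional_extensionality => i;
  rewrite /offset; [congr x | congr [:: x _]]; lia.
Qed.

Lemma decomp_uniq n : unique_decomp n.
Proof.
elim: n => [|n IH]; first exact: unique_decomp0.
move=> x y o W y' o' W' D D'.
have [u [B [DB [hu Vy hc] eW _]]] := decomp_refine D.
have [u' [B' [DB' DV' _ _]]] := decomp_refine D'.
have [c [eu eo _]] := IH _ _ _ _ _ _ _ DB DB'.
have DV2 : decomp 1 u y' c (fun i => (split_infl n (y' i) (W' i)).1).
  by case: DV'; rewrite eu => h1 h2 /tiles_shift; rewrite add0r.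
have U1 := unique_of_unique_covering unique_covering_decomp1.
have [d [ey ec _]] := U1 _ _ _ _ _ _ _ (And3 hu Vy hc) DV2.
have ho' : start B o c = start W o d.
  by rewrite ec [in RHS]eW -(start_group (fun i => startS _ 0 i)) !start0.
exists d; split; rewrite ?eo //; case: (D') => _ _ hc'.
apply: (tiles_blocks_unique hc'); first by rewrite eo ho'; case: (D) => _ _ /tiles_offset.
by move=> i; rewrite (size_decomp i D') /offset (size_decomp (i + d) D) ey.
Qed.

Lemma covering_decomp_uniq n : unique_covering_decomp n.
Proof. exact/unique_covering_of_unique/decomp_uniq. Qed.

(** * Action of families of permutations *)

Definition family n := forall a : A, {perm seq_sub (infl n a)}.
Definition fam_mul n (F G : family n) : family n := fun a => (F a * G a)%g.
Definition fam_inv n (F : family n) : family n := fun a => (F a)^-1%g.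
Definition fam1 n : family n := fun a => 1%g.
Definition fam_even n (F : family n) := forall a, ~~ odd_perm (F a).

Lemma f_alpha_decomp n a (al : {perm seq_sub (infl n a)}) x y o w :
  decomp n x y o w -> covers0 n y o ->
  decomp n (f_alpha al x) y o (fun i => if y i == a then app al (w i) else w i).
Proof.
move=> D N; case: (D) => hy hw hc.
have hw' i : (if y i == a then app al (w i) else w i) \in infl n (y i).
  by case: eqP => [e|_] //; move: (hw i); rewrite e; exact: app_in.
have [x1 hx1] := tiles_exists o (fun i => size_infl_gt0 (hw' i)).
have [k ek hk] := (covers0P _ _ _).1 N; subst o.
rewrite /f_alpha; set P := fun x' => _.
have : P (epsilon (inhabits x) P).
  apply: epsilon_spec; exists x1, y, k, w.
  by do 3 split => //; split; apply/concat_relE.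
move=> [y2 [k2 [w2 [hy2 [hk2 [hw2 [/concat_relE hc2 /concat_relE hc2']]]]]]].
have N2 : covers0 n y2 (- k2%:Z) by apply/covers0P; exists k2.
have [ey eo ew] := covering_decomp_uniq D N (And3 hy2 hw2 hc2) N2.
by subst; split; rewrite // -eo.
Qed.

Lemma gprod_decomp_covers0 n (als : family n) x y o w :
  decomp n x y o w -> covers0 n y o ->
  decomp n (gprod als x) y o (fun i => app (als (y i)) (w i)).
Proof.
move=> D N; rewrite /gprod.
suff H (l : seq A) : uniq l -> decomp n (foldr (fun a g => f_alpha (als a) \o g) id l x) y o
    (fun i => if y i \in l then app (als (y i)) (w i) else w i).
  move: (H _ (enum_uniq A)); congr decomp.
  by apply: functional_extensionality => i; rewrite mem_enum.
elim: l => [|a l IH] /=.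
  by move=> _; congr decomp: D; apply: functional_extensionality => i.
case/andP=> ha /IH /(f_alpha_decomp (als a)) /(_ N).
congr decomp; apply: functional_extensionality => i; rewrite inE.
by case: eqP => [->|] //=; rewrite (negbTE ha).
Qed.

Lemma gprod_decomp n (F : family n) x y o w : decomp n x y o w ->
  decomp n (gprod F x) y o (fun i => app (F (y i)) (w i)).
Proof.
move=> D; have [c [Dc Nc]] := decomp_covers0 D.
have := decomp_offset (- c) (gprod_decomp_covers0 F Dc Nc).
have offsetK (T : Type) (f : int -> T) : offset (offset f c) (- c) = f.
  by apply: functional_extensionality => i; rewrite /offset subrK.
rewrite offsetK (eq_start _ (w' := offset w c)) ?start_offset ?addNr ?start0.
  by congr decomp; apply: functional_extensionality => i; rewrite /offset subrK.
by move=> i; case: Dc => _ /(_ i) hw _; rewrite (size_infl (app_in _ hw)) (size_infl hw).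
Qed.
Lemma fam_ext n (F G : family n) : (forall a, F a = G a) -> F = G.
Proof. exact: functional_extensionality_dep. Qed.

Lemma decomp_inj n x1 x2 y o w : decomp n x1 y o w -> decomp n x2 y o w -> x1 = x2.
Proof.
move=> D1 [_ _ h2]; case: (D1) => _ _ h1.
exact: tiles_seq_unique (fun i => decomp_size_gt0 i D1) h1 h2.
Qed.

Lemma gprod_inX n (F : family n) x : inX x -> inX (gprod F x).
Proof.
by move=> /(decomp_exists n) [y [o [w /(gprod_decomp F)/decomp_inX]]].
Qed.

Lemma gprodM n (F G : family n) x : inX x -> gprod F (gprod G x) = gprod (fam_mul G F) x.
Proof.
move=> /(decomp_exists n) [y [o [w D]]].
apply: decomp_inj (gprod_decomp F (gprod_decomp G D)) _.
move: (gprod_decomp (fam_mul G F) D); congr decomp.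
by apply: functional_extensionality => i; rewrite appM.
Qed.

Lemma gprod1 n x : inX x -> gprod (fam1 n) x = x.
Proof.
move=> /(decomp_exists n) [y [o [w D]]].
apply: decomp_inj (gprod_decomp (fam1 n) D) _.
by move: D; congr decomp; apply: functional_extensionality => i; rewrite app1.
Qed.

Lemma gprodK n (F : family n) x : inX x -> gprod (fam_inv F) (gprod F x) = x.
Proof.
move=> hx; rewrite gprodM // -[RHS](gprod1 n hx); congr gprod.
by apply: fam_ext => a; rewrite /fam_mul /fam_inv mulgV.
Qed.

Lemma gprodVK n (F : family n) x : inX x -> gprod F (gprod (fam_inv F) x) = x.
Proof.
move=> hx; rewrite gprodM // -[RHS](gprod1 n hx); congr gprod.
by apply: fam_ext => a; rewrite /fam_mul /fam_inv mulVg.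
Qed.

(* Only letters occurring in [X_theta] matter: the maps [gprod F] ignore the
   other components of [F]. *)
Definition occurs (b : A) := exists2 y, inX y & y 0 = b.

Lemma occurs_inX y i : inX y -> occurs (y i).
Proof. by move=> hy; exists (offset y i); [exact: inX_offset | rewrite /offset add0r]. Qed.

Definition place_word m y W i := if i == 0 then W else head [::] (infl m (y i)).

Lemma decomp_place_word m y b W : inX y -> y 0 = b -> W \in infl m b ->
  exists x, decomp m x y 0 (place_word m y W) /\ covers0 m y 0.
Proof.
move=> hy hb hW.
have hin i : place_word m y W i \in infl m (y i).
  by rewrite /place_word; case: eqP => [->|_]; [rewrite hb | exact: infl_head].
have [x hx] := tiles_exists 0 (fun i => size_infl_gt0 (hin i)).
exists x; split; first by split.
by rewrite /covers0 lexx andbT; have := ilen_gt0 m (y 0); lia.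
Qed.

Lemma gprod_faithful m (F G : family m) :
  eqX (gprod F) (gprod G) -> forall b, occurs b -> F b = G b.
Proof.
move=> E b [y hy hb]; apply: eq_app => W hW.
have [x [D N]] := decomp_place_word hy hb hW.
have DF := gprod_decomp F D; rewrite E in DF; last exact: decomp_inX D.
have [_ _ /(congr1 (fun f => f 0))] := covering_decomp_uniq DF N (gprod_decomp G D) N.
by rewrite /= /place_word eqxx hb.
Qed.

(** * Lifting families to the next level *)

Section Lift.
Variable n : nat.
Implicit Types (F G : family n) (b : A).

Definition lift_word F b W :=
  flatten [seq app (F q.1) q.2 | q <- zip (split_infl n b W).1 (split_infl n b W).2].

Lemma lift_word_in F b W : W \in infl n.+1 b -> lift_word F b W \in infl n.+1 b.
Proof.
move=> /split_inflP; rewrite /lift_word; case: (split_infl n b W) => v ws [/= hv hws _].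
apply/mem_inflSl; exists (v, [seq app (F q.1) q.2 | q <- zip v ws]); split => //=.
elim: v ws hws {hv} => [|c v IH] [|w ws] //=.
by case/andP=> /(app_in (F c)) -> /IH.
Qed.

Lemma gprod_decompS F x y o W : decomp n.+1 x y o W ->
  decomp n.+1 (gprod F x) y o (fun i => lift_word F (y i) (W i)).
Proof.
move=> D; case: (D) => hy hW _.
have [u [B [DB [_ _ hcV] _ hB]]] := decomp_refine D.
have [_ _ hg] := gprod_decomp F DB.
have := tiles_group (fun i => startS (fun i => (split_infl n (y i) (W i)).1) 0 i) hg.
rewrite !start0 => hg2; split => // [i|]; first exact: lift_word_in.
move: hg2; congr tiles; apply: functional_extensionality => i.
rewrite /lift_word /group_blocks -(hB i) {2}(hcV i) zip_map -map_comp.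
by congr flatten; apply/eq_in_map.
Qed.

Lemma lift_word_inj F b W1 W2 : occurs b -> W1 \in infl n.+1 b -> W2 \in infl n.+1 b ->
  lift_word F b W1 = lift_word F b W2 -> W1 = W2.
Proof.
move=> [y hy hb] h1 h2 e.
have [x1 [D1 _]] := decomp_place_word hy hb h1.
have [x2 [D2 _]] := decomp_place_word hy hb h2.
have ex : x1 = x2.
  rewrite -(gprodK F (decomp_inX D1)) -(gprodK F (decomp_inX D2)); congr gprod.
  apply: decomp_inj (gprod_decompS F D1) _; move: (gprod_decompS F D2); congr decomp.
  by apply: functional_extensionality => i; rewrite /place_word; case: eqP => // ->; rewrite hb e.
subst x2; case: D1 => _ _ c1; case: D2 => _ _ c2.
have /(congr1 (fun f => f 0)) : place_word n.+1 y W1 = place_word n.+1 y W2.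
  apply: (tiles_blocks_unique c1 c2) => i; rewrite /place_word; case: eqP => // _.
  by rewrite (size_infl h1) (size_infl h2).
by rewrite /place_word eqxx.
Qed.

Definition lift_sub F b (s : seq_sub (infl n.+1 b)) : seq_sub (infl n.+1 b) :=
  Sub (lift_word F b (val s)) (lift_word_in F (ssvalP s)).
Arguments lift_sub F b s : clear implicits.

Lemma lift_sub_inj F b : occurs b -> injective (lift_sub F b).
Proof.
move=> hb s1 s2 /(congr1 val) /= e; apply: val_inj.
exact: lift_word_inj hb (ssvalP s1) (ssvalP s2) e.
Qed.

(* [lift_word F b] is only known to be injective when [b] occurs in [X_theta];
   on the other letters any permutation induces the same map. *)
Definition lift_fam F : family n.+1 := fun b =>
  match excluded_middle_informative (occurs b) with
  | left h => perm (@lift_sub_inj F b h)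
  | right _ => 1%g
  end.

Lemma app_lift_fam F b W : occurs b -> W \in infl n.+1 b ->
  app (lift_fam F b) W = lift_word F b W.
Proof.
move=> hb hW; rewrite /lift_fam; case: excluded_middle_informative => [h|//].
by rewrite -[W]/(val (Sub W hW : seq_sub (infl n.+1 b))) app_val permE.
Qed.

Lemma lift_fam_out F b : ~ occurs b -> lift_fam F b = 1%g.
Proof. by move=> hb; rewrite /lift_fam; case: excluded_middle_informative. Qed.

Lemma gprod_lift_fam F : eqX (gprod (lift_fam F)) (gprod F).
Proof.
move=> x /(decomp_exists n.+1) [y [o [W D]]].
apply: decomp_inj (gprod_decomp (lift_fam F) D) _; move: (gprod_decompS F D).
congr decomp; apply: functional_extensionality => i; case: (D) => hy hW _.
by rewrite app_lift_fam //; exact: occurs_inX.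
Qed.

Lemma lift_famM F G b : lift_fam (fam_mul F G) b = (lift_fam F b * lift_fam G b)%g.
Proof.
case: (classic (occurs b)) => hb; last by rewrite !lift_fam_out // mulg1.
apply: (gprod_faithful (G := fam_mul (lift_fam F) (lift_fam G))) hb => x hx.
rewrite gprod_lift_fam // -gprodM // -gprodM //.
by rewrite (gprod_lift_fam F hx) gprod_lift_fam //; exact: gprod_inX.
Qed.

Lemma lift_fam1 b : lift_fam (fam1 n) b = 1%g.
Proof.
case: (classic (occurs b)) => hb; last by rewrite !lift_fam_out.
apply: (gprod_faithful (G := fam1 n.+1)) hb => x hx.
by rewrite gprod_lift_fam // !gprod1.
Qed.

Definition fam_at a (s : {perm seq_sub (infl n a)}) : family n := dfwith (fam1 n) s.

Lemma fam_atM a (s t : {perm seq_sub (infl n a)}) :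
  fam_at (s * t)%g = fam_mul (fam_at s) (fam_at t).
Proof.
apply: fam_ext => c; rewrite /fam_mul /fam_at.
by case: (eqVneq a c) => [<-|ne]; rewrite ?dfwith_in // !dfwith_out // /fam1 mulg1.
Qed.

(* [F] is the product of its components [fam_at (F a)], and [s |-> lift_fam
   (fam_at s) b] is a homomorphism between symmetric groups. *)
Lemma lift_fam_even F : fam_even F -> fam_even (lift_fam F).
Proof.
move=> HF b.
pose prod_at (l : seq A) := foldr (fun a acc => fam_mul (fam_at (F a)) acc) (fam1 n) l.
have prod_atE l : uniq l -> forall c, prod_at l c = if c \in l then F c else 1%g.
  elim: l => [|a l IH] //= /andP [ha hl] c; rewrite /fam_mul IH // /fam_at in_cons.
  case: (eqVneq c a) => [->|ne]; first by rewrite dfwith_in (negbTE ha) mulg1.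
  by rewrite dfwith_out 1?eq_sym // /fam1 mul1g.
have -> : F = prod_at (enum A).
  by apply: fam_ext => c; rewrite prod_atE ?enum_uniq // mem_enum.
elim: (enum A) => [|a l IH] /=; first by rewrite lift_fam1 odd_perm1.
rewrite lift_famM odd_permM (negbTE IH) addbF.
apply: (morph_perm_even (phi := fun s => lift_fam (fam_at s) b)); last exact: HF.
by move=> s t; rewrite fam_atM lift_famM.
Qed.

End Lift.

(** * The groups A and Gamma *)

Lemma eqX_trans f g h : eqX f g -> eqX g h -> eqX f h.
Proof. by move=> H1 H2 x hx; rewrite H1 // H2. Qed.

Lemma eqX_sym f g : eqX f g -> eqX g f.
Proof. by move=> H x hx; rewrite H. Qed.

Lemma lift_family_le n m : (n <= m)%N -> forall F : family n,
  exists G : family m, eqX (gprod G) (gprod F) /\ (fam_even F -> fam_even G).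
Proof.
elim: m => [|m IH] hnm F.
  move: F; have -> : n = 0%N by lia.
  by move=> F; exists F.
case: (eqVneq n m.+1) => [e|ne]; first by move: F; rewrite e => F; exists F.
have [G [eG evG]] := IH ltac:(lia) F; exists (lift_fam G); split.
  exact: eqX_trans (gprod_lift_fam G) eG.
by move=> /evG; exact: lift_fam_even.
Qed.

Lemma GammaN_le n m g : (n <= m)%N -> GammaN theta n g -> GammaN theta m g.
Proof.
move=> hnm [F hF]; have [G [eG _]] := lift_family_le hnm F.
by exists G; exact: eqX_trans hF (eqX_sym eG).
Qed.

Lemma AltN_le n m g : (n <= m)%N -> AltN theta n g -> AltN theta m g.
Proof.
move=> hnm [F [evF hF]]; have [G [eG evG]] := lift_family_le hnm F.
by exists G; split; [exact: evG | exact: eqX_trans hF (eqX_sym eG)].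
Qed.

Lemma fam_mul_even n (F G : family n) : fam_even F -> fam_even G -> fam_even (fam_mul F G).
Proof. by move=> hF hG a; rewrite /fam_mul odd_permM (negbTE (hF a)) (negbTE (hG a)). Qed.

Lemma fam_inv_even n (F : family n) : fam_even F -> fam_even (fam_inv F).
Proof. by move=> hF a; rewrite /fam_inv odd_permV. Qed.

Lemma Alt1 : Alt theta id.
Proof.
exists 1%N; split => //; exists (fam1 1); split; first by move=> a; rewrite odd_perm1.
by move=> x hx; rewrite gprod1.
Qed.

Lemma AltM g h : Alt theta g -> Alt theta h -> Alt theta (g \o h).
Proof.
move=> [n [hn hg]] [m [hm hh]].
have [F [hF eF]] := AltN_le (leq_maxl n m) hg.
have [G [hG eG]] := AltN_le (leq_maxr n m) hh.
exists (maxn n m); split; first by lia.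
exists (fam_mul G F); split; first exact: fam_mul_even.
by move=> x hx /=; rewrite eG // eF; [exact: gprodM | exact: gprod_inX].
Qed.

Lemma AltV g : Alt theta g ->
  exists h, Alt theta h /\ eqX (h \o g) id /\ eqX (g \o h) id.
Proof.
move=> [n [hn [F [hF eF]]]]; exists (gprod (fam_inv F)); split.
  by exists n; split => //; exists (fam_inv F); split => //; exact: fam_inv_even.
split=> x hx /=; first by rewrite eF ?gprodK.
by rewrite eF ?gprodVK //; exact: gprod_inX.
Qed.

Lemma Alt_normal g g' h : Gamma theta g -> eqX (g' \o g) id -> eqX (g \o g') id ->
  Alt theta h -> Alt theta (g \o h \o g').
Proof.
move=> [n hg] e1 e2 [m [hm hh]].
have [F eF] := GammaN_le (leq_maxl n m) hg.
have [H [hH eH]] := AltN_le (leq_maxr n m) hh.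
exists (maxn n m); split; first by lia.
exists (fam_mul (fam_mul (fam_inv F) H) F); split.
  by move=> a; rewrite /fam_mul !odd_permM odd_permV; move: (hH a); do 2 case: odd_perm.
move=> x hx /=; have hz := gprod_inX (fam_inv F) hx.
have gz : g (gprod (fam_inv F) x) = x by rewrite eF // gprodVK.
have -> : g' x = gprod (fam_inv F) x by rewrite -{1}gz; exact: e1.
rewrite eH // eF ?gprodM //; last exact: gprod_inX.
congr gprod.
by apply: fam_ext => a; rewrite /fam_mul mulgA.
Qed.

Definition same_coset g c := exists h, Alt theta h /\ eqX g (c \o h).

Definition coset_cover cs :=
  forall g, Gamma theta g -> exists c h, List.In c cs /\ Alt theta h /\ eqX g (c \o h).

Definition distinct_cosets cs :=
  (forall c, List.In c cs -> Gamma theta c) /\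
  (forall i j, (i < j < size cs)%N -> ~ same_coset (nth id cs j) (nth id cs i)).

Lemma same_coset_parity N (F G : family N) g c : (1 <= N)%N ->
  eqX g (gprod G) -> eqX c (gprod F) -> (forall a, odd_perm (F a) = odd_perm (G a)) ->
  same_coset g c.
Proof.
move=> hN eG eF hpar; pose H : family N := fun a => (G a * (F a)^-1)%g.
exists (gprod H); split.
  exists N; split => //; exists H; split => // a.
  by rewrite /H odd_permM odd_permV hpar addbb.
move=> x hx /=; rewrite eG // eF; last exact: gprod_inX.
rewrite gprodM //; congr gprod.
by apply: fam_ext => a; rewrite /fam_mul /H mulgKV.
Qed.

Lemma In_nth (T : Type) (x0 : T) (s : seq T) i : (i < size s)%N -> List.In (nth x0 s i) s.
Proof. by elim: s i => [|x s IH] [|i] //= hi; [left | right; apply: IH]. Qed.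

Lemma common_level cs : (forall c, List.In c cs -> Gamma theta c) ->
  exists2 N, (1 <= N)%N & forall c, List.In c cs -> GammaN theta N c.
Proof.
elim: cs => [|c cs IH] H; first by exists 1%N.
have [N hN HN] := IH (fun c' h => H c' (or_intror h)).
have [n hn] := H c (or_introl erefl).
exists (maxn n N); first by lia.
move=> c' [<-|hc']; first exact: GammaN_le (leq_maxl n N) hn.
exact: GammaN_le (leq_maxr n N) (HN c' hc').
Qed.

(* Distinct cosets have distinct parity vectors in [{ffun A -> bool}]. *)
Lemma distinct_cosets_size cs : distinct_cosets cs -> (size cs <= 2 ^ #|A|)%N.
Proof.
move=> [hG hP]; have [N hN HN] := common_level hG.
pose fam_of (i : 'I_(size cs)) : family N :=
  epsilon (inhabits (fam1 N)) (fun F => eqX (nth id cs i) (gprod F)).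
have fam_ofP (i : 'I_(size cs)) : eqX (nth id cs i) (gprod (fam_of i)).
  exact: epsilon_spec (HN _ (In_nth id (ltn_ord i))).
pose parity i : {ffun A -> bool} := [ffun a => odd_perm (fam_of i a)].
suff /leq_card : injective parity by rewrite card_ord card_ffun card_bool.
have neq_parity (i j : 'I_(size cs)) : (i < j)%N -> parity i != parity j.
  move=> hij; apply/eqP => e; apply: (hP i j); first by rewrite hij ltn_ord.
  apply: same_coset_parity hN (fam_ofP j) (fam_ofP i) _ => a.
  by have := congr1 (fun f : {ffun A -> bool} => f a) e; rewrite !ffunE.
move=> i j e; apply: val_inj; case: (ltngtP i j) => // h.
  by have := neq_parity _ _ h; rewrite e eqxx.
by have := neq_parity _ _ h; rewrite e eqxx.
Qed.

Lemma distinct_cosets_rcons cs : distinct_cosets cs -> ~ coset_cover cs ->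
  exists g, distinct_cosets (rcons cs g).
Proof.
move=> [hG hP] Hn; have [g Hg] := not_all_ex_not _ _ Hn.
have [hg hng] := imply_to_and _ _ Hg.
exists g; split.
  move=> c; rewrite -cats1 => /(List.in_app_or cs [:: g] c) [|[<-|[]]] //; exact: hG.
move=> i j; rewrite size_rcons => /andP [hij hj]; rewrite !nth_rcons.
have -> : (i < size cs)%N by lia.
case: (ltnP j (size cs)) => hj'; first by apply: hP; rewrite hij.
have -> : j = size cs by lia.
rewrite eqxx => [[h [hh eh]]]; apply: hng.
by exists (nth id cs i), h; split => //; apply: In_nth; lia.
Qed.

Lemma coset_cover_exists :
  exists2 cs, (size cs <= 2 ^ #|A|)%N /\ (forall c, List.In c cs -> Gamma theta c)
            & coset_cover cs.
Proof.
apply: NNPP => Hn.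
suff [cs [/distinct_cosets_size hle hs]] : exists cs, distinct_cosets cs /\ size cs = (2 ^ #|A|).+1.
  by rewrite hs ltnn in hle.
elim: (2 ^ #|A|).+1 => [|k [cs [hv hs]]].
  by exists [::]; split => //; split => // i j; rewrite /= andbF.
have [|g hg] := distinct_cosets_rcons hv.
  by move=> Hc; apply: Hn; exists cs => //; split; [exact: distinct_cosets_size | case: hv].
by exists (rcons cs g); rewrite size_rcons hs.
Qed.

End Shuffles.

Theorem lemma3p11 (A : finType) (theta : A -> seq (seq A)) :
  wf_subst theta -> compatible theta -> recognisable theta ->
  (* A_n is contained in A_{n+1} *)
  (forall n : nat, (1 <= n)%N ->
     forall g, AltN theta n g -> AltN theta n.+1 g) /\
  (* A is a subgroup of Gamma *)
  (forall g, Alt theta g -> Gamma theta g) /\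
  Alt theta id /\
  (forall g h, Alt theta g -> Alt theta h -> Alt theta (g \o h)) /\
  (forall g, Alt theta g ->
     exists h, Alt theta h /\ eqX theta (h \o g) id /\ eqX theta (g \o h) id) /\
  (* A is normal in Gamma *)
  (forall g g' h, Gamma theta g -> eqX theta (g' \o g) id -> eqX theta (g \o g') id ->
     Alt theta h -> Alt theta (g \o h \o g')) /\
  (* the index of A in Gamma is at most 2^d *)
  (exists cs : seq ((int -> A) -> (int -> A)),
     (size cs <= 2 ^ #|A|)%N /\ (forall c, List.In c cs -> Gamma theta c) /\
     forall g, Gamma theta g ->
       exists c h, List.In c cs /\ Alt theta h /\ eqX theta g (c \o h)).
Proof.
move=> Hwf Hcomp Hrec.
split; first by move=> n _ g; exact: (AltN_le Hwf Hcomp Hrec (leqnSn n)).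
split; first by move=> g [n [_ [F [_ eF]]]]; exists n, F.
split; first exact: Alt1.
split; first exact: AltM.
split; first exact: AltV.
split; first exact: Alt_normal.
by have [cs [hsize hGamma] hcover] := coset_cover_exists Hwf Hcomp Hrec; exists cs.
Qed.
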